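(* Let $G$ be a finite $(n+1)$-partite graph with ordered parts $(V^0,\ldots,V^n)$ which is partite type-regular. Then its symmetrization $G^{\circledast S_{n+1}}=\circledast_{\pi\in S_{n+1}}\pi(G)$ is hyper-regular, i.e. for every $1\le m\le n$ all cliques of size $m$ in $G^{\circledast S_{n+1}}$ have joint neighbourhoods of the same size.
   Context: Let $I=\{0,\ldots,n\}$. For an $(n+1)$-partite graph with parts $(V^i)_{i\in I}$ and $J\subseteq I$, a clique is of type $J$ if it has exactly one vertex in $V^j$ for each $j\in J$ and no others. The link of a clique $C$ is the set of vertices adjacent to all vertices of $C$. $G$ is partite type-regular if for every $J\subsetneq I$ and $i\in I\setminus J$ there is $d_J(i)\in\mathbb{N}$ with $|V^i\cap\mathrm{link}(C)|=d_J(i)$ for every clique $C$ of type $J$. Partite product: for $(n+1)$-partite $G_1,G_2$, $G_1\circledast G_2$ has ordered parts $(V_1^i\times V_2^i)_{i\in I}$ and $(a,b)\in V_1^i\times V_2^i$, $(c,d)\in V_1^j\times V_2^j$ ($i\neq j$) are adjacent iff $\{a,c\}\in E_1$ and $\{b,d\}\in E_2$; iterating gives $\circledast$ of finitely many graphs. For $\pi\in S_{n+1}$ (permutations of $I$), $\pi(G)$ is the same graph with ordered parts $(V^{\pi(0)},\ldots,V^{\pi(n)})$. Hyper-regularity (as in the paper): $G$ is $(d_0,\ldots,d_{n-1})$-regular if it is $d_0$-regular and for each $1\le i\le n-1$ the subgraph induced on the joint neighbourhood of every $i$-clique is $d_i$-regular; equivalently, for each $1\le m\le n$ the joint neighbourhood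 of every clique of size $m$ has the same size $d_{m-1}$. *)

From mathcomp Require Import all_boot all_order all_fingroup.
Set Implicit Arguments. Unset Strict Implicit. Unset Printing Implicit Defensive.

Definition is_clique (V : finType) (e : rel V) (C : {set V}) : Prop :=
  forall x y, x \in C -> y \in C -> x != y -> e x y.

Definition link (V : finType) (e : rel V) (C : {set V}) : {set V} :=
  [set y | [forall x in C, e x y]].

Definition partite_graph (n : nat) (V : finType) (e : rel V)
    (part : V -> 'I_n.+1) : Prop :=
  symmetric e /\ irreflexive e /\ (forall x y, e x y -> part x != part y).

Definition clique_of_type (n : nat) (V : finType) (e : rel V)
    (part : V -> 'I_n.+1) (J : {set 'I_n.+1}) (C : {set V}) : Prop :=
  is_clique e C /\
  forall j : 'I_n.+1, #|[set x in C | part x == j]| = (j \in J).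

Definition partite_type_regular (n : nat) (V : finType) (e : rel V)
    (part : V -> 'I_n.+1) : Prop :=
  forall (J : {set 'I_n.+1}) (i : 'I_n.+1), J != setT -> i \notin J ->
    exists d : nat, forall C : {set V}, clique_of_type e part J C ->
      #|[set x in link e C | part x == i]| = d.

(* Symmetrization G^{sym} = iterated partite product of pi(G) over all pi in S_{n+1}.
   pi(G) has ordered parts (V^{pi 0}, ..., V^{pi n}), so a vertex x of G lies in
   part i of pi(G) iff part x = pi i.  The iterated partite product has, as
   part i, the tuples (v_pi)_pi with v_pi in part i of pi(G), i.e.
   part (v_pi) = pi i for all pi. *)
Definition sym_pred (n : nat) (V : finType) (part : V -> 'I_n.+1)
    (v : {ffun {perm 'I_n.+1} -> V}) : bool :=
  [exists i : 'I_n.+1, [forall s : {perm 'I_n.+1}, part (v s) == s i]].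

Definition sym_vertex (n : nat) (V : finType) (part : V -> 'I_n.+1) :=
  {v : {ffun {perm 'I_n.+1} -> V} | sym_pred part v}.

Definition sym_part (n : nat) (V : finType) (part : V -> 'I_n.+1)
    (v : sym_vertex part) : 'I_n.+1 := part (val v 1%g).

Definition sym_adj (n : nat) (V : finType) (e : rel V) (part : V -> 'I_n.+1)
    : rel (sym_vertex part) :=
  fun v w => (sym_part v != sym_part w) &&
             [forall s : {perm 'I_n.+1}, e (val v s) (val w s)].

(* Hyper-regularity: for each 1 <= m <= n the joint neighbourhood of every
   clique of size m has the same size d_{m-1} (here d m). *)
Definition hyper_regular (n : nat) (W : finType) (f : rel W) : Prop :=
  exists d : nat -> nat, forall m : nat, 1 <= m <= n ->
    forall C : {set W}, is_clique f C -> #|C| = m -> #|link f C| = d m.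

Arguments sym_adj {n V} e part.
Arguments hyper_regular n {W} f.

From mathcomp Require Import all_boot all_order all_fingroup.
From mathcomp Require Import alt primitive_action.
Set Implicit Arguments. Unset Strict Implicit. Unset Printing Implicit Defensive.

(* A vertex v of the symmetrization lying in part i is a family (v_s) indexed
   by the permutations s of I, with v_s in part s(i) of G.  A clique C meeting
   the parts J therefore projects coordinatewise onto cliques C_s of G of type
   s(J), and a common neighbour of C in a part i \notin J is exactly a family
   of common neighbours of the C_s whose s-coordinate lies in part s(i).
   Hence |link C| = sum_(i \notin J) prod_s d_(s J)(s i), with d given by
   type-regularity.  If |C'| = |C| then J' = t(J) for a permutation t, and the
   term of index (i, s o t) for C equals the term of index (t(i), s) for C'. *)

Lemma perm_imset_eq (T : finType) (A B : {set T}) :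
  #|A| = #|B| -> exists s : {perm T}, s @: A = B.
Proof.
move=> eqAB.
have trA := ntransitive_weak (max_card A) (Sym_trans T).
pose tA : #|A|.-tuple T := [tuple of enum A].
pose tB : #|A|.-tuple T := tcast (esym eqAB) [tuple of enum B].
have dtuple_enum (t : #|A|.-tuple T) (X : {set T}) :
    val t = enum X -> t \in #|A|.-dtuple(setT).
  by move=> tX; rewrite inE tX enum_uniq; apply/subsetP.
have tB_enum : val tB = enum B := val_tcast _ _.
have [s _ tBs] :=
  atransP2 trA (dtuple_enum tA A erefl) (dtuple_enum tB B tB_enum).
exists s; apply/setP => x.
have -> : (x \in B) = (x \in val tB) by rewrite tB_enum mem_enum.
by rewrite tBs /=; apply/imsetP/mapP => -[y yA ->];
  exists y; rewrite ?mem_enum in yA *.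
Qed.

Lemma card_ffun_setX (I V : finType) (A : I -> {set V}) :
  #|[set x : {ffun I -> V} | [forall i, x i \in A i]]| = \prod_i #|A i|.
Proof. by rewrite -cardsXn /setXn !cardsE. Qed.

Definition cliqueb (W : finType) (f : rel W) (C : {set W}) : bool :=
  [forall x in C, forall y in C, (x != y) ==> f x y].

Lemma cliqueP (W : finType) (f : rel W) (C : {set W}) :
  reflect (is_clique f C) (cliqueb f C).
Proof.
apply: (iffP forall_inP) => [fC x y xC yC | fC x xC].
  by have /forall_inP/(_ y yC)/implyP := fC x xC; apply.
by apply/forall_inP => y yC; apply/implyP; apply: fC.
Qed.

Lemma hyper_regular_of_eq_card_link (n : nat) (W : finType) (f : rel W) :
  (forall C1 C2 : {set W}, is_clique f C1 -> is_clique f C2 ->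
     #|C1| = #|C2| -> #|link f C1| = #|link f C2|) ->
  hyper_regular n f.
Proof.
move=> eq_link.
exists (fun m => if [pick C | cliqueb f C && (#|C| == m)] is Some C
                 then #|link f C| else 0).
move=> m _ C fC <-; case: pickP => [C0 /andP[/cliqueP fC0 /eqP C0C] | noC].
  exact: eq_link.
by move: (noC C); rewrite eqxx andbT; have /cliqueP -> := fC.
Qed.

Section PartLink.
Variables (n : nat) (V : finType) (e : rel V) (part : V -> 'I_n.+1).

Definition part_link (X : {set V}) (i : 'I_n.+1) : {set V} :=
  [set x in link e X | part x == i].

Lemma type_regular_card_part_link_eq (J : {set 'I_n.+1}) (X1 X2 : {set V}) i :
  partite_type_regular e part ->
  clique_of_type e part J X1 -> clique_of_type e part J X2 -> i \notin J ->
  #|part_link X1 i| = #|part_link X2 i|.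
Proof.
move=> reg X1J X2J iJ.
have J_proper : J != setT by apply: contraNneq iJ => ->; rewrite inE.
by have [d Hd] := reg J i J_proper iJ; rewrite !Hd.
Qed.

End PartLink.

Section Symmetrization.
Variables (n : nat) (V : finType) (e : rel V) (part : V -> 'I_n.+1).
Local Notation W := (sym_vertex part).
Local Notation f := (sym_adj e part).
Local Notation sym_part := (@sym_part n V part).
Implicit Types (C : {set W}) (s t : {perm 'I_n.+1}).

Definition coord s (v : W) : V := val v s.

Definition coord_set C s : {set V} := coord s @: C.

Definition clique_type C : {set 'I_n.+1} := sym_part @: C.

Lemma part_coord s (v : W) : part (coord s v) = s (sym_part v).
Proof.
case: v => v v_sym; have /existsP[i /forallP v_i] := v_sym.
rewrite /coord /sym_part /=.
by have /eqP -> := v_i 1%g; rewrite perm1; apply/eqP.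
Qed.

Lemma clique_sym_part_inj C : is_clique f C -> {in C &, injective sym_part}.
Proof.
move=> fC a b aC bC ab; have [// | a_neq_b] := eqVneq a b.
by have := fC a b aC bC a_neq_b; rewrite /sym_adj ab eqxx.
Qed.

Lemma card_clique_type C : is_clique f C -> #|clique_type C| = #|C|.
Proof. by move=> fC; rewrite card_in_imset //; apply: clique_sym_part_inj. Qed.

Lemma clique_coord_inj C s :
  irreflexive e -> is_clique f C -> {in C &, injective (coord s)}.
Proof.
move=> e_irr fC a b aC bC ab; have [// | a_neq_b] := eqVneq a b.
have /andP[_ /forallP/(_ s)] := fC a b aC bC a_neq_b.
by rewrite -/(coord s a) ab e_irr.
Qed.

Lemma card_clique_part C i : is_clique f C ->
  #|[set a in C | sym_part a == i]| = (i \in clique_type C).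
Proof.
move=> fC; case: (boolP (i \in clique_type C)) => [/imsetP[a aC ->] | iC].
  suff -> : [set b in C | sym_part b == sym_part a] = [set a] by rewrite cards1.
  apply/setP => b; rewrite !inE; apply/andP/eqP => [[bC /eqP] | ->].
    by apply: (clique_sym_part_inj fC).
  by split; rewrite ?eqxx.
apply/eqP; rewrite cards_eq0; apply/eqP/setP => b; rewrite !inE.
by apply/andP => -[bC /eqP bi]; rewrite -bi imset_f in iC.
Qed.

Lemma coord_set_of_type C s : irreflexive e -> is_clique f C ->
  clique_of_type e part (s @: clique_type C) (coord_set C s).
Proof.
move=> e_irr fC; split.
  move=> _ _ /imsetP[a aC ->] /imsetP[b bC ->] sab.
  have ab : a != b by apply: contraNneq sab => ->.
  by have /andP[_ /forallP] := fC a b aC bC ab; apply.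
move=> j; have -> : [set x in coord_set C s | part x == j] =
    coord s @: [set a in C | sym_part a == s^-1%g j].
  apply/setP => x; rewrite !inE; apply/andP/imsetP => [[/imsetP[a aC ->]] | [a]].
    by rewrite part_coord => /eqP aj; exists a; rewrite // inE aC -aj permK eqxx.
  rewrite inE => /andP[aC /eqP aj] ->.
  by rewrite imset_f // part_coord aj permKV.
rewrite card_in_imset; last first.
  by move=> a b /setIdP[aC _] /setIdP[bC _]; apply: (clique_coord_inj e_irr fC).
by rewrite card_clique_part // -{2}(permKV s j) mem_imset //; apply: perm_inj.
Qed.

Lemma card_link_sym_part C i : is_clique f C -> i \notin clique_type C ->
  #|[set w in link f C | sym_part w == i]| =
    \prod_s #|part_link e part (coord_set C s) (s i)|.
Proof.
move=> fC iC; rewrite -card_ffun_setX -(card_imset _ val_inj).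
apply: eq_card => g; rewrite [in RHS]inE; apply/imsetP/forallP.
  case=> w /setIdP[w_link /eqP wi] -> s.
  rewrite !inE -/(coord s w) part_coord wi eqxx andbT.
  apply/forall_inP => _ /imsetP[a aC ->].
  by move: w_link; rewrite inE => /forall_inP/(_ a aC)/andP[_ /forallP]; apply.
move=> g_link.
have g_sym : sym_pred part g.
  by apply/existsP; exists i; apply/forallP => s; have /setIdP[] := g_link s.
have g_part : sym_part (exist _ g g_sym) = i.
  by have /setIdP[_ /eqP] := g_link 1%g; rewrite perm1.
exists (exist _ g g_sym) => //; rewrite !inE g_part eqxx andbT.
apply/forall_inP => a aC; rewrite /sym_adj g_part.
apply/andP; split; first by apply: contraNneq iC => <-; apply: imset_f.
apply/forallP => s; have /setIdP[g_s _] := g_link s.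
by move: g_s; rewrite inE => /forall_inP; apply; apply: imset_f.
Qed.

Lemma card_link_sym C : is_clique f C ->
  #|link f C| = \sum_(i | i \notin clique_type C)
                  \prod_s #|part_link e part (coord_set C s) (s i)|.
Proof.
move=> fC; rewrite -sum1_card (partition_big sym_part predT) //=.
rewrite (bigID (mem (clique_type C))) /= big1 ?add0n.
  by apply: eq_bigr => i iC; rewrite sum1dep_card card_link_sym_part.
move=> _ /imsetP[a aC ->]; apply: big1 => w.
rewrite inE => /andP[/forall_inP/(_ a aC) aw /eqP wa].
by move: aw; rewrite /sym_adj wa eqxx.
Qed.

Lemma card_link_sym_eq C1 C2 :
  irreflexive e -> partite_type_regular e part ->
  is_clique f C1 -> is_clique f C2 -> #|C1| = #|C2| ->
  #|link f C1| = #|link f C2|.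
Proof.
move=> e_irr reg fC1 fC2 eqC.
have [t tJ] : exists t, t @: clique_type C1 = clique_type C2.
  by apply: perm_imset_eq; rewrite !card_clique_type.
have tJ_mem i : (t i \in clique_type C2) = (i \in clique_type C1).
  by rewrite -tJ mem_imset //; apply: perm_inj.
rewrite !card_link_sym // [in RHS](reindex_inj (@perm_inj _ t)) /=.
apply: eq_big => [i | i iC1]; first by rewrite tJ_mem.
rewrite (reindex_inj (mulgI t)) /=; apply: eq_bigr => s _; rewrite permM.
have tsJ : (t * s)%g @: clique_type C1 = s @: clique_type C2.
  by rewrite -tJ -imset_comp; apply: eq_imset => x; rewrite /= permM.
apply: (@type_regular_card_part_link_eq _ _ _ _ (s @: clique_type C2)) => //.
- by rewrite -tsJ; apply: coord_set_of_type.
- exact: coord_set_of_type.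
- by rewrite mem_imset ?tJ_mem //; apply: perm_inj.
Qed.

End Symmetrization.

Theorem mainTheorem9 (n : nat) (V : finType) (e : rel V)
    (part : V -> 'I_n.+1) :
  partite_graph e part ->
  partite_type_regular e part ->
  hyper_regular n (sym_adj e part).
Proof.
move=> [_ [e_irr _]] reg; apply: hyper_regular_of_eq_card_link => C1 C2.
exact: card_link_sym_eq.
Qed.
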